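(* Assume (A1) and (A2). Run $\mathrm{BOGD}_{\mathrm{IP}}$ with any step size $\eta>0$, any positive integer block size $K$ dividing $T$, and any tolerance $\epsilon>0$. For any $\mathbf{u}_1,\dots,\mathbf{u}_T\in\mathcal{K}$, writing $s(m)=(m-1)K+1$ and $P_T'=\sum_{m=2}^{T/K}\|\mathbf{u}_{s(m-1)}-\mathbf{u}_{s(m)}\|_2$, we have $$\sum_{m=1}^{T/K}\sum_{k=1}^{K}\big\langle\nabla f_{(m-1)K+k}(\mathbf{x}_m),\,\tilde{\mathbf{y}}_m-\mathbf{u}_{s(m)}\big\rangle\le\frac{7}{4\eta}D^2+\frac{\eta}{2}KTG^2+\frac{D}{\eta}P_T'.$$
   Context: Standing assumptions: (A1) $\mathcal{K}\subseteq\mathbb{R}^d$ is convex and compact, contains $\mathbf{0}$, and $\mathcal{K}\subseteq R\mathcal{B}$ where $R\mathcal{B}$ is the closed Euclidean ball of radius $R$ centered at $\mathbf{0}$; set $D=2R$, so $\|\mathbf{x}-\mathbf{x}'\|_2\le D$ for all $\mathbf{x},\mathbf{x}'\in\mathcal{K}$. (A2) Each loss $f_t$ is $G$-Lipschitz on $\mathcal{K}$, and its (sub)gradients satisfy $\|\nabla f_t(\mathbf{x})\|_2\le G$. Infeasible projection oracle $\mathcal{O}_{\mathrm{IP}}(\mathcal{K},\epsilon,\mathbf{x}_0,\mathbf{y}_0)$: given $\epsilon>0$, $\mathbf{x}_0\in\mathcal{K}$, $\mathbf{y}_0\in\mathbb{R}^d$, returns $(\mathbf{x},\tilde{\mathbf{y}})\in\mathcal{K}\times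 R\mathcal{B}$ with $\|\mathbf{x}-\tilde{\mathbf{y}}\|_2\le\sqrt{3\epsilon}$ and $\|\tilde{\mathbf{y}}-\mathbf{z}\|_2\le\|\mathbf{y}_0-\mathbf{z}\|_2$ for all $\mathbf{z}\in\mathcal{K}$. Algorithm $\mathrm{BOGD}_{\mathrm{IP}}$ (step size $\eta$, block size $K$, tolerance $\epsilon$): pick $\mathbf{x}_1\in\mathcal{K}$ arbitrary, $\tilde{\mathbf{y}}_1=\mathbf{x}_1$. Rounds are split into blocks; block $m$ consists of rounds $(m-1)K+1,\dots,mK$. At every round $t$ of block $m$ the algorithm plays $\mathbf{x}_t=\mathbf{x}_m$. At the last round of block $m$ it sets $\mathbf{y}_{m+1}=\tilde{\mathbf{y}}_m-\eta\sum_{r=(m-1)K+1}^{mK}\nabla f_r(\mathbf{x}_m)$ and $(\mathbf{x}_{m+1},\tilde{\mathbf{y}}_{m+1})=\mathcal{O}_{\mathrm{IP}}(\mathcal{K},\epsilon,\mathbf{x}_m,\mathbf{y}_{m+1})$. *)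

From mathcomp Require Import all_boot all_order all_algebra.
From mathcomp Require Import all_classical all_reals all_analysis.
Set Implicit Arguments. Unset Strict Implicit. Unset Printing Implicit Defensive.
Import Order.TTheory GRing.Theory Num.Theory.
Import numFieldNormedType.Exports.
Local Open Scope ring_scope.
Local Open Scope classical_set_scope.

Definition dotv {R : realType} {d : nat} (u v : 'rV[R]_d) : R :=
  \sum_(i < d) u ord0 i * v ord0 i.
Definition norm2 {R : realType} {d : nat} (u : 'rV[R]_d) : R :=
  Num.sqrt (dotv u u).

Definition convex_set {R : realType} {d : nat} (K : set 'rV[R]_d) : Prop :=
  forall x y (t : R), K x -> K y -> 0 <= t -> t <= 1 ->
    K (t *: x + (1 - t) *: y).

Definition assumption_A1 {R : realType} {d : nat} (K : set 'rV[R]_d) (rad : R)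
  : Prop :=
  [/\ convex_set K, compact K, K 0 & forall x, K x -> norm2 x <= rad].

Definition assumption_A2 {R : realType} {d : nat} (K : set 'rV[R]_d) (G : R)
  (f : nat -> 'rV[R]_d -> R) (grad : nat -> 'rV[R]_d -> 'rV[R]_d) : Prop :=
  forall t, 
    (forall x y, K x -> K y -> `|f t x - f t y| <= G * norm2 (x - y)) /\
    (forall x, K x -> norm2 (grad t x) <= G) /\
    (forall x y, K x -> K y -> f t x + dotv (grad t x) (y - x) <= f t y).

(* Valid output (x, yt) of the infeasible projection oracle O_IP(K, eps, x0, y0) *)
Definition IP_output {R : realType} {d : nat} (K : set 'rV[R]_d) (rad eps : R)
  (x0 y0 x yt : 'rV[R]_d) : Prop :=
  [/\ K x, norm2 yt <= rad, norm2 (x - yt) <= Num.sqrt (3 * eps)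
    & forall z, K z -> norm2 (yt - z) <= norm2 (y0 - z)].

Definition block_grad {R : realType} {d : nat}
  (grad : nat -> 'rV[R]_d -> 'rV[R]_d) (K m : nat) (x : 'rV[R]_d) : 'rV[R]_d :=
  \sum_((m - 1) * K + 1 <= r < m * K + 1) grad r x.

(* x m, yt m (m >= 1, block-indexed) form a run of BOGD_IP over N = T/K blocks:
   x_1 in K, yt_1 = x_1, and for each block m < N the next pair is a valid
   oracle output for y_{m+1} = yt_m - eta * (sum of block-m gradients at x_m). *)
Definition BOGD_IP_run {R : realType} {d : nat} (Kset : set 'rV[R]_d)
  (rad eps eta : R) (K N : nat) (grad : nat -> 'rV[R]_d -> 'rV[R]_d)
  (x yt : nat -> 'rV[R]_d) : Prop :=
  [/\ Kset (x 1%N), yt 1%N = x 1%N &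
    forall m : nat, (1 <= m)%N -> (m < N)%N ->
      IP_output Kset rad eps (x m) (yt m - eta *: block_grad grad K m (x m))
        (x m.+1) (yt m.+1)].

Definition sblk (K m : nat) : nat := ((m - 1) * K + 1)%N.

From mathcomp Require Import all_boot all_order all_algebra.
From mathcomp Require Import all_classical all_reals all_analysis.
From mathcomp Require Import ring lra zify.
Import Order.TTheory GRing.Theory Num.Theory.
Import numFieldNormedType.Exports.
Local Open Scope ring_scope.
Local Open Scope classical_set_scope.

(* Write g_m for the gradient sum of block m, v_m = u_(s(m)) for the block
   comparator and A_m = |yt_m - v_m|^2.  The oracle guarantees that yt_(m+1)
   is no farther than the gradient step yt_m - eta g_m from v_m, so expanding
   the square gives 2 eta <g_m, yt_m - v_m> <= A_m - |yt_(m+1) - v_m|^2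
   + eta^2 |g_m|^2; since all points lie in the ball of radius rad, replacing
   v_m by v_(m+1) costs at most 4 rad |v_m - v_(m+1)|.  Summing over the
   blocks telescopes the A_m, and |g_m| <= K G, A_1 <= (2 rad)^2 give
   2 eta * regret <= D^2 + 2 D P_T' + eta^2 K T G^2, whence the claim. *)

Section Euclidean.
Context {R : realType} {d : nat}.
Implicit Types u v w a b c : 'rV[R]_d.
Local Notation dot := (@dotv R d).
Local Notation nrm := (@norm2 R d).

Lemma dotvC u v : dot u v = dot v u.
Proof. by apply: eq_bigr => i _; rewrite mulrC. Qed.

Lemma dotvDl u w v : dot (u + w) v = dot u v + dot w v.
Proof. by rewrite /dotv -big_split; apply: eq_bigr => i _; rewrite mxE mulrDl. Qed.

Lemma dotvZl (s : R) u v : dot (s *: u) v = s * dot u v.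
Proof. by rewrite /dotv mulr_sumr; apply: eq_bigr => i _; rewrite mxE mulrA. Qed.

Lemma dotvNl u v : dot (- u) v = - dot u v.
Proof. by rewrite -scaleN1r dotvZl mulN1r. Qed.

Lemma dotvBl u w v : dot (u - w) v = dot u v - dot w v.
Proof. by rewrite dotvDl dotvNl. Qed.

Lemma dotvDr u w v : dot v (u + w) = dot v u + dot v w.
Proof. by rewrite dotvC dotvDl !(dotvC v). Qed.

Lemma dotvZr (s : R) u v : dot v (s *: u) = s * dot v u.
Proof. by rewrite dotvC dotvZl dotvC. Qed.

Lemma dotvBr u w v : dot v (u - w) = dot v u - dot v w.
Proof. by rewrite !(dotvC v) dotvBl. Qed.

Lemma dotv_suml I (r : seq I) (P : pred I) (F : I -> 'rV[R]_d) v :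
  dot (\sum_(i <- r | P i) F i) v = \sum_(i <- r | P i) dot (F i) v.
Proof.
elim/big_rec2: _ => [|i y1 y2 _ IH]; last by rewrite dotvDl IH.
by rewrite /dotv big1 // => i _; rewrite mxE mul0r.
Qed.

Lemma dotv_ge0 u : 0 <= dot u u.
Proof. by apply: sumr_ge0 => i _; rewrite -expr2 sqr_ge0. Qed.

Lemma dotv_eq0 u v : dot u u = 0 -> dot u v = 0.
Proof.
move=> uu0; rewrite /dotv big1 // => i _.
have /eqP : u ord0 i * u ord0 i = 0.
  by apply: (psumr_eq0P _ uu0) => // j _; rewrite -expr2 sqr_ge0.
by rewrite mulf_eq0 orbb => /eqP ->; rewrite mul0r.
Qed.

Lemma norm2_ge0 u : 0 <= nrm u.
Proof. exact: sqrtr_ge0. Qed.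

Lemma norm2_sq u : nrm u ^+ 2 = dot u u.
Proof. exact: sqr_sqrtr (dotv_ge0 u). Qed.

Lemma norm2N u : nrm (- u) = nrm u.
Proof. by rewrite /norm2 dotvNl dotvC dotvNl opprK. Qed.

Lemma norm2_le u v : (nrm u <= nrm v) = (dot u u <= dot v v).
Proof. by rewrite ler_psqrt // qualifE /= dotv_ge0. Qed.

Lemma norm2_le_sq u (c : R) : nrm u <= c -> dot u u <= c ^+ 2.
Proof.
move=> uc; rewrite -norm2_sq ler_sqr // qualifE /= ?norm2_ge0 //.
exact: le_trans (norm2_ge0 u) uc.
Qed.

Lemma le_of_sqr_le (x y : R) : 0 <= y -> x ^+ 2 <= y ^+ 2 -> x <= y.
Proof.
move=> y0; rewrite -(real_normK (num_real x)) ler_sqr ?qualifE /= ?normr_ge0 //.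
exact: le_trans (real_ler_norm (num_real x)).
Qed.

Lemma cauchy_schwarz u v : dot u v <= nrm u * nrm v.
Proof.
have [uu0|uu_neq0] := eqVneq (dot u u) 0.
  by rewrite dotv_eq0 // mulr_ge0 // norm2_ge0.
have uu_pos : 0 < dot u u by rewrite lt_def uu_neq0 dotv_ge0.
apply: le_of_sqr_le; first by rewrite mulr_ge0 // norm2_ge0.
rewrite exprMn !norm2_sq.
pose t := dot u v / dot u u.
have tuu : t * dot u u = dot u v by rewrite /t divfK.
have := dotv_ge0 (v - t *: u).
rewrite dotvBl !dotvBr !dotvZl !dotvZr (dotvC v u) => sq_ge0.
have := mulr_ge0 (ltW uu_pos) sq_ge0; nra.
Qed.

Lemma norm2D u w : nrm (u + w) <= nrm u + nrm w.
Proof.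
apply: le_of_sqr_le; first by rewrite addr_ge0 // norm2_ge0.
rewrite norm2_sq dotvDl !dotvDr (dotvC w u) sqrrD !norm2_sq.
have := cauchy_schwarz u w; lra.
Qed.

Lemma norm2_sum I (r : seq I) (P : pred I) (F : I -> 'rV[R]_d) :
  nrm (\sum_(i <- r | P i) F i) <= \sum_(i <- r | P i) nrm (F i).
Proof.
elim/big_rec2: _ => [|i y1 y2 _ IH].
  by rewrite /norm2 /dotv big1 ?sqrtr0 // => i _; rewrite mxE mul0r.
by apply: le_trans (norm2D _ _) _; rewrite lerD2l.
Qed.

End Euclidean.

Section GradientStep.
Context {R : realType} {d : nat}.
Implicit Types a b c g v y : 'rV[R]_d.
Local Notation dot := (@dotv R d).
Local Notation nrm := (@norm2 R d).

Lemma gradient_step_identity a b (s : R) :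
  2 * s * dot b a = dot a a - dot (a - s *: b) (a - s *: b) + s ^+ 2 * dot b b.
Proof. rewrite dotvBl !dotvBr !dotvZl !dotvZr (dotvC a b); ring. Qed.

Lemma linear_term_bound a b (s : R) :
  2 * s * dot b a <= dot a a + s ^+ 2 * dot b b.
Proof.
rewrite gradient_step_identity; have := dotv_ge0 (a - s *: b); lra.
Qed.

Lemma comparator_shift {a b c} {rad : R} :
  nrm a <= rad -> nrm b <= rad -> nrm c <= rad ->
  dot (a - c) (a - c) <= dot (a - b) (a - b) + 4 * rad * nrm (b - c).
Proof.
move=> a_le b_le c_le.
have diff_sq : dot (a - c) (a - c) - dot (a - b) (a - b)
    = dot (b - c) ((a - c) + (a - b)).
  have -> : b - c = (a - c) - (a - b) by rewrite opprB [RHS]addrC addrA subrK.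
  move: (a - b) (a - c) => p q.
  rewrite dotvBl !dotvDr (dotvC p q); ring.
have dist_le w : nrm w <= rad -> nrm (a - w) <= 2 * rad.
  by move=> w_le; apply: le_trans (norm2D _ _) _; rewrite norm2N; lra.
have sum_le : nrm ((a - c) + (a - b)) <= 4 * rad.
  by apply: le_trans (norm2D _ _) _; have := dist_le _ b_le; have := dist_le _ c_le; lra.
have := cauchy_schwarz (b - c) ((a - c) + (a - b)).
have := ler_wpM2l (norm2_ge0 (b - c)) sum_le.
lra.
Qed.

Lemma projected_step_bound {y y' g v v'} {eta rad : R} :
  nrm (y' - v) <= nrm (y - eta *: g - v) ->
  nrm y' <= rad -> nrm v <= rad -> nrm v' <= rad ->
  2 * eta * dot g (y - v) <=
    dot (y - v) (y - v) - dot (y' - v') (y' - v') + 4 * rad * nrm (v - v')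
    + eta ^+ 2 * dot g g.
Proof.
rewrite norm2_le addrAC => proj y'_le v_le v'_le.
have := comparator_shift y'_le v_le v'_le.
have := gradient_step_identity (y - v) g eta.
lra.
Qed.

End GradientStep.

Lemma telescoping_sum (R : realDomainType) (c A p : nat -> R) (q : R) (N : nat) :
  0 <= A 1%N ->
  (forall m, (1 <= m < N)%N -> c m <= A m - A m.+1 + p m + q) ->
  ((1 <= N)%N -> c N <= A N + q) ->
  \sum_(1 <= m < N.+1) c m <= A 1%N + \sum_(1 <= m < N) p m + N%:R * q.
Proof.
case: N => [A1_ge0 _ _ | n _ step last].
  by rewrite !big_geq // mul0r !addr0.
have tele : \sum_(1 <= m < n.+1) (A m - A m.+1) = A 1%N - A n.+1.
  by rewrite -opprB -telescope_sumr // -sumrN; apply: eq_bigr => m _; rewrite opprB.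
have middle : \sum_(1 <= m < n.+1) c m <=
    \sum_(1 <= m < n.+1) (A m - A m.+1 + p m + q).
  by rewrite big_nat [X in _ <= X]big_nat; apply: ler_sum => m /step.
rewrite big_nat_recr //= -natr1 mulrDl mul1r.
move: middle (last isT).
rewrite big_split big_split /= tele sumr_const_nat subn1 /= -mulr_natl.
lra.
Qed.

Section Blocks.
Context {R : realType} {d : nat}.
Variables (grad : nat -> 'rV[R]_d -> 'rV[R]_d) (K : nat).

Lemma block_gradE m x : (0 < m)%N ->
  block_grad grad K m x = \sum_(1 <= k < K.+1) grad ((m - 1) * K + k)%N x.
Proof.
case: m => // m _; rewrite /block_grad subn1 /= addnC big_addn.
have -> : (m.+1 * K + 1 - m * K = K.+1)%N by rewrite mulSn; lia.
by apply: eq_bigr => k _; rewrite addnC.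
Qed.

Lemma block_grad_norm m x (G : R) : (0 < m)%N ->
  (forall r, norm2 (grad r x) <= G) -> norm2 (block_grad grad K m x) <= K%:R * G.
Proof.
move=> m_gt0 gradG; rewrite block_gradE //.
apply: le_trans (norm2_sum _ _ _ _) _.
apply: le_trans (ler_sum _ (fun r _ => gradG ((m - 1) * K + r)%N)) _.
by rewrite sumr_const_nat subn1 /= mulr_natl.
Qed.

End Blocks.

Lemma sblk_range (K N m : nat) : (0 < K)%N -> (1 <= m <= N)%N ->
  (1 <= sblk K m <= N * K)%N.
Proof. rewrite /sblk; nia. Qed.

Section Run.
Context {R : realType} {d : nat}.
Context {Kset : set 'rV[R]_d} {rad eps eta G : R} {K N : nat}.
Context {grad : nat -> 'rV[R]_d -> 'rV[R]_d} {x yt : nat -> 'rV[R]_d}.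
Hypothesis Kball : forall z, Kset z -> norm2 z <= rad.
Hypothesis run : BOGD_IP_run Kset rad eps eta K N grad x yt.

Lemma run_iterates_bounded m : (1 <= m <= N)%N ->
  Kset (x m) /\ norm2 (yt m) <= rad.
Proof.
case: run => x1K yt1 step; case: m => [|[|m]] // /andP[_ m_le].
  by rewrite yt1; split; last apply: Kball.
by case: (step m.+1 isT m_le).
Qed.

Hypothesis gradG : forall r z, Kset z -> norm2 (grad r z) <= G.

Local Notation g m := (block_grad grad K m (x m)).

Lemma run_block_grad_sq m : (1 <= m <= N)%N ->
  dotv (g m) (g m) <= (K%:R * G) ^+ 2.
Proof.
move=> m_range; have [xK _] := run_iterates_bounded _ m_range.
apply/norm2_le_sq/block_grad_norm => [|r]; first by case/andP: m_range.
exact: gradG.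
Qed.

Variable v : nat -> 'rV[R]_d.
Hypothesis vK : forall m, (1 <= m <= N)%N -> Kset (v m).

Local Notation A m := (dotv (yt m - v m) (yt m - v m)).

Lemma run_block_bound m : (1 <= m < N)%N ->
  2 * eta * dotv (g m) (yt m - v m) <=
    A m - A m.+1 + 4 * rad * norm2 (v m - v m.+1) + eta ^+ 2 * (K%:R * G) ^+ 2.
Proof.
move=> /andP[m_ge1 m_lt].
have m_range : (1 <= m <= N)%N by rewrite m_ge1 ltnW.
have m1_range : (1 <= m.+1 <= N)%N by rewrite m_lt.
case: run => _ _ step; case: (step m m_ge1 m_lt) => _ yt1_le _ proj.
have := projected_step_bound (proj _ (vK _ m_range)) yt1_le
  (Kball _ (vK _ m_range)) (Kball _ (vK _ m1_range)).
have := ler_wpM2l (sqr_ge0 eta) (run_block_grad_sq _ m_range).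
lra.
Qed.

(* The last block is not followed by a projection. *)
Lemma run_last_block_bound : (1 <= N)%N ->
  2 * eta * dotv (g N) (yt N - v N) <= A N + eta ^+ 2 * (K%:R * G) ^+ 2.
Proof.
move=> N_ge1; have N_range : (1 <= N <= N)%N by rewrite N_ge1 leqnn.
have := linear_term_bound (yt N - v N) (g N) eta.
have := ler_wpM2l (sqr_ge0 eta) (run_block_grad_sq _ N_range).
lra.
Qed.

Lemma run_regret_bound :
  2 * eta * \sum_(1 <= m < N.+1) dotv (g m) (yt m - v m) <=
    (2 * rad) ^+ 2 + 4 * rad * \sum_(1 <= m < N) norm2 (v m - v m.+1)
    + N%:R * (eta ^+ 2 * (K%:R * G) ^+ 2).
Proof.
have [N0 | N_gt0] := posnP N.
  by rewrite N0 !big_geq // !mulr0 mul0r !addr0 sqr_ge0.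
have one_range : (1 <= 1 <= N)%N by rewrite N_gt0.
have A1_le : A 1%N <= (2 * rad) ^+ 2.
  have [_ yt1_le] := run_iterates_bounded _ one_range.
  have v1_le := Kball _ (vK _ one_range).
  apply: norm2_le_sq; apply: le_trans (norm2D _ _) _; rewrite norm2N; lra.
rewrite mulr_sumr mulr_sumr.
have total := @telescoping_sum _ (fun m => 2 * eta * dotv (g m) (yt m - v m))
  (fun m => A m) (fun m => 4 * rad * norm2 (v m - v m.+1)) _ _
  (dotv_ge0 _) run_block_bound run_last_block_bound.
by apply: le_trans total _; rewrite !lerD2r.
Qed.

End Run.

(* Dividing the scaled regret bound by 2 eta gives the stated bound; the
   D^2 term only needs the coefficient 1/(2 eta) <= 7/(4 eta). *)
Lemma rescale_regret_bound (R : realFieldType) (S rad P eta k n G : R) :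
  0 < eta ->
  2 * eta * S <= (2 * rad) ^+ 2 + 4 * rad * P + n * (eta ^+ 2 * (k * G) ^+ 2) ->
  S <= 7 / (4 * eta) * (2 * rad) ^+ 2 + eta / 2 * k * (n * k) * G ^+ 2
       + 2 * rad / eta * P.
Proof.
move=> eta_gt0 scaled.
have eta2_gt0 : 0 < 2 * eta by rewrite mulr_gt0.
rewrite -(ler_pM2l eta2_gt0).
have -> : 2 * eta * (7 / (4 * eta) * (2 * rad) ^+ 2
      + eta / 2 * k * (n * k) * G ^+ 2 + 2 * rad / eta * P)
    = 7 / 2 * (2 * rad) ^+ 2 + n * (eta ^+ 2 * (k * G) ^+ 2) + 4 * rad * P.
  by field; rewrite gt_eqF.
have := sqr_ge0 (2 * rad); lra.
Qed.

Theorem lemma5 (R : realType) (d : nat) (Kset : set 'rV[R]_d) (rad G : R)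
  (f : nat -> 'rV[R]_d -> R) (grad : nat -> 'rV[R]_d -> 'rV[R]_d)
  (eta eps : R) (K T : nat) (x yt u : nat -> 'rV[R]_d) :
  assumption_A1 Kset rad ->
  assumption_A2 Kset G f grad ->
  0 < eta -> 0 < eps -> (0 < K)%N -> (K %| T)%N ->
  BOGD_IP_run Kset rad eps eta K (T %/ K) grad x yt ->
  (forall t, (1 <= t <= T)%N -> Kset (u t)) ->
  let D := 2 * rad in
  let N := (T %/ K)%N in
  let PT' := \sum_(2 <= m < N.+1) norm2 (u (sblk K m.-1) - u (sblk K m)) in
  \sum_(1 <= m < N.+1) \sum_(1 <= k < K.+1)
      dotv (grad ((m - 1) * K + k)%N (x m)) (yt m - u (sblk K m))
  <= 7 / (4 * eta) * D ^+ 2 + eta / 2 * K%:R * T%:R * G ^+ 2 + D / eta * PT'.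
Proof.
move=> [_ _ _ Kball] A2 eta_gt0 _ K_gt0 K_dvd_T run uK; cbv zeta.
set N := (T %/ K)%N in run *; set PT' := \sum_(2 <= m < N.+1) _.
have T_eq : T = (N * K)%N by rewrite divnK.
have gradG r z : Kset z -> norm2 (grad r z) <= G by case: (A2 r) => _ [/(_ z)].
have vK m : (1 <= m <= N)%N -> Kset (u (sblk K m)).
  by move=> m_range; apply: uK; rewrite T_eq sblk_range.
have regret := run_regret_bound Kball run gradG _ vK.
have blocks_eq : \sum_(1 <= m < N.+1) \sum_(1 <= k < K.+1)
      dotv (grad ((m - 1) * K + k)%N (x m)) (yt m - u (sblk K m))
    = \sum_(1 <= m < N.+1) dotv (block_grad grad K m (x m)) (yt m - u (sblk K m)).
  apply: eq_big_nat => m /andP[m_ge1 _].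
  by rewrite (block_gradE _ _ _ _ m_ge1) dotv_suml.
have PT'_eq : PT' = \sum_(1 <= m < N) norm2 (u (sblk K m) - u (sblk K m.+1)).
  by rewrite /PT' big_add1.
rewrite blocks_eq PT'_eq T_eq natrM.
exact: rescale_regret_bound eta_gt0 regret.
Qed.
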